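(* For every $j \geq 1$, the partial function $\xi_j$ preserves both $\rho_1$ and $\rho_C$, i.e. $\xi_j \in \mathrm{pPol}\,\rho_1$ and $\xi_j\in\mathrm{pPol}\,\rho_C$.
   Context: Partial functions are on $\{0,1\}$: an $n$-ary partial function is a map $f:\operatorname{dom} f\to\{0,1\}$ with $\operatorname{dom} f\subseteq\{0,1\}^n$. For a relation $\rho\subseteq\{0,1\}^h$, $f$ preserves $\rho$ ($f\in\mathrm{pPol}\,\rho$) if for every $h\times n$ matrix whose rows lie in $\operatorname{dom} f$ and whose columns lie in $\rho$, the column obtained by applying $f$ to each row lies in $\rho$. Let $n(k,p)=(2k-1)p+1$ for $k\ge2$, $p\ge1$; $\tau^k_p$ is the $n(k,p)$-ary partial function with domain $\{(1,\dots,1)\}\cup\{\mathbf{x}\in\{0,1\}^{n(k,p)}:\mathbf{x}\text{ has at most }p\text{ entries equal to }1\}$, taking value $1$ at $(1,\dots,1)$ and $0$ elsewhere on its domain. Let $p_1=1$, $p_j=n(j,p_{j-1})$ for $j\ge2$, and $\xi_j=\tau^{j+1}_{p_j}$. $\rho_C\subseteq\{0,1\}^4$ consists of the tuples $(0,0,0,0),(0,0,1,1),(0,1,0,1),(1,1,1,1)$; $\rho_1\subseteq\{0,1\}^4$ consists of $(0,0,0,0),(0,0,1,1),(0,1,0,1),(1,0,1,0),(1,1,0,0),(1,1,1,1)$. *)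

From mathcomp Require Import all_boot.
Set Implicit Arguments. Unset Strict Implicit. Unset Printing Implicit Defensive.

Definition bvec (n : nat) := {ffun 'I_n -> bool}.

(* An n-ary partial function on {0,1}: a domain and a map (only its values
   on the domain matter). *)
Record pfun (n : nat) := PFun {
  pdom : pred (bvec n);
  pval : bvec n -> bool }.

Definition brel (h : nat) := pred (bvec h).

Definition preserves (n h : nat) (f : pfun n) (rho : brel h) : Prop :=
  forall M : 'I_h -> 'I_n -> bool,
    (forall i : 'I_h, pdom f [ffun j => M i j]) ->
    (forall j : 'I_n, rho [ffun i => M i j]) ->
    rho [ffun i => pval f [ffun j => M i j]].

Definition nkp (k p : nat) : nat := (2 * k - 1) * p + 1.

Definition ones (n : nat) (x : bvec n) : nat := #|[pred j | x j]|.

Definition all_ones (n : nat) (x : bvec n) : bool := [forall j, x j].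

Definition tau (k p : nat) : pfun (nkp k p) :=
  @PFun (nkp k p) (fun x => all_ones x || (ones x <= p)) (fun x => all_ones x).

(* p_1 = 1, p_j = n(j, p_{j-1}) for j >= 2; indexed so that pseq j = p_j for j >= 1. *)
Fixpoint pseq (j : nat) : nat :=
  match j with
  | 0 => 1 (* unused *)
  | 1 => 1
  | S j' => nkp j (pseq j')
  end.

Definition xi (j : nat) : pfun (nkp j.+1 (pseq j)) := tau j.+1 (pseq j).

Definition v4 (a b c d : bool) : bvec 4 :=
  [ffun i : 'I_4 => nth false [:: a; b; c; d] i].

Definition rhoC : brel 4 := fun x =>
  [|| x == v4 false false false false, x == v4 false false true true,
      x == v4 false true false true | x == v4 true true true true].

Definition rho1 : brel 4 := fun x =>
  [|| x == v4 false false false false, x == v4 false false true true,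
      x == v4 false true false true, x == v4 true false true false,
      x == v4 true true false false | x == v4 true true true true].

(** A row of a matrix in the domain of [tau k p] is either all ones (value 1)
    or has at most [p] ones (value 0), and [2 p < n(k, p)] as soon as [k >= 2].
    Hence [tau k p] transfers to its output column every clause of the two
    shapes [x_i /\ x_j -> x_k] and [x_k -> x_i \/ x_j] that holds in all input
    columns: for the first, rows [i] and [j] all ones force row [k] all ones;
    for the second, if row [k] is all ones then rows [i] and [j] cover all [n]
    positions, so one of them has more than [p] ones and is all ones too.
    Both [rho_1] and [rho_C] are exactly the sets of solutions of such clauses. *)

From mathcomp Require Import all_boot zify.

Set Implicit Arguments.
Unset Strict Implicit.
Unset Printing Implicit Defensive.

Definition meet_clause (h : nat) (x : bvec h) (ijk : 'I_h * 'I_h * 'I_h) : bool :=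
  let: (i, j, k) := ijk in x i && x j ==> x k.

Definition cover_clause (h : nat) (x : bvec h) (kij : 'I_h * 'I_h * 'I_h) : bool :=
  let: (k, i, j) := kij in x k ==> x i || x j.

Lemma nkp_gt_double k p : 1 < k -> 2 * p < nkp k p.
Proof. by move=> k_gt1; rewrite /nkp addn1 ltnS leq_mul2r; apply/orP; right; lia. Qed.

Lemma all_ones_ones n (x : bvec n) : all_ones x -> ones x = n.
Proof.
move=> /forallP x1; rewrite /ones -[RHS](card_ord n).
by apply: eq_card => c; rewrite !inE x1.
Qed.

Lemma ones_cover n (x y z : bvec n) :
  (forall c, z c -> x c || y c) -> ones z <= ones x + ones y.
Proof.
move=> zxy; rewrite /ones -cardUI.
apply: leq_trans (leq_addr _ _); apply: subset_leq_card.
by apply/subsetP => c; rewrite !inE => /zxy.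
Qed.

Lemma tau_row_ones k p (x : bvec (nkp k p)) :
  pdom (tau k p) x -> ~~ all_ones x -> ones x <= p.
Proof. by move=> /= /orP[-> //|]. Qed.

Section TauClauses.

Variables (k p h : nat) (M : 'I_h -> 'I_(nkp k p) -> bool).
Hypothesis rows_in_dom : forall i, pdom (tau k p) [ffun c => M i c].

Let column c : bvec h := [ffun i => M i c].
Let output : bvec h := [ffun i => pval (tau k p) [ffun c => M i c]].

Lemma tau_meet_clause t :
  (forall c, meet_clause (column c) t) -> meet_clause output t.
Proof.
case: t => [[i j] l] /= col_meet; rewrite !ffunE.
apply/implyP => /andP[/forallP row_i /forallP row_j]; apply/forallP => c.
have := row_i c; have := row_j c; have := col_meet c.
by rewrite /column !ffunE => /implyP meet_c ri rj; apply: meet_c; rewrite ri rj.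
Qed.

Lemma tau_cover_clause t : 2 * p < nkp k p ->
  (forall c, cover_clause (column c) t) -> cover_clause output t.
Proof.
case: t => [[l i] j] /= n_gt col_cover; rewrite !ffunE.
apply/implyP => row_l; apply: contraTT n_gt; rewrite negb_or => /andP[ni nj].
have := ones_cover (z := [ffun c => M l c]) (x := [ffun c => M i c])
  (y := [ffun c => M j c]).
rewrite (all_ones_ones row_l) -leqNgt => cover; apply: leq_trans (cover _) _.
  by move=> c; have := col_cover c; rewrite /column !ffunE => /implyP.
by rewrite mul2n -addnn leq_add // tau_row_ones.
Qed.

End TauClauses.

Lemma tau_preserves_clauses k p h (rho : brel h) meets covers :
  2 * p < nkp k p ->
  (forall x, rho x = all (meet_clause x) meets && all (cover_clause x) covers) ->
  preserves (tau k p) rho.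
Proof.
move=> n_gt rhoE M dom col; rewrite rhoE; apply/andP; split; apply/allP => t t_in.
- apply: tau_meet_clause => c.
  by have := col c; rewrite rhoE => /andP[/allP/(_ t t_in)].
- apply: tau_cover_clause => // c.
  by have := col c; rewrite rhoE => /andP[_ /allP/(_ t t_in)].
Qed.

Definition i0 : 'I_4 := @Ordinal 4 0 isT.
Definition i1 : 'I_4 := @Ordinal 4 1 isT.
Definition i2 : 'I_4 := @Ordinal 4 2 isT.
Definition i3 : 'I_4 := @Ordinal 4 3 isT.

Lemma bvec4E (x : bvec 4) : x = v4 (x i0) (x i1) (x i2) (x i3).
Proof.
apply/ffunP => i; rewrite ffunE.
by case: i => [[|[|[|[|?]]]] ?] //=; congr (x _); apply: val_inj.
Qed.

Lemma v4_eq a b c d a' b' c' d' :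
  (v4 a b c d == v4 a' b' c' d') = [&& a == a', b == b', c == c' & d == d'].
Proof.
apply/eqP/and4P => [e|[/eqP-> /eqP-> /eqP-> /eqP->]] //.
have at_i i := congr1 (fun f : bvec 4 => f i) e.
move: (at_i i0) (at_i i1) (at_i i2) (at_i i3); rewrite !ffunE /= => -> -> -> ->.
by rewrite !eqxx.
Qed.

Lemma rho1_clauses x :
  rho1 x = all (meet_clause x) [:: (i1, i2, i0); (i1, i2, i3); (i0, i3, i1); (i0, i3, i2)]
        && all (cover_clause x) [:: (i0, i1, i2); (i3, i1, i2); (i1, i0, i3); (i2, i0, i3)].
Proof.
rewrite [in LHS](bvec4E x) /rho1 !v4_eq /=.
by case: (x i0); case: (x i1); case: (x i2); case: (x i3).
Qed.

Lemma rhoC_clauses x :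
  rhoC x = all (meet_clause x) [:: (i0, i0, i1); (i0, i0, i2); (i1, i2, i0)]
        && all (cover_clause x) [:: (i1, i3, i3); (i2, i3, i3); (i3, i1, i2)].
Proof.
rewrite [in LHS](bvec4E x) /rhoC !v4_eq /=.
by case: (x i0); case: (x i1); case: (x i2); case: (x i3).
Qed.

Theorem mainTheorem15 :
  forall j : nat, 1 <= j -> preserves (xi j) rho1 /\ preserves (xi j) rhoC.
Proof.
move=> j j_ge1; have n_gt := @nkp_gt_double j.+1 (pseq j) j_ge1.
by split; apply: tau_preserves_clauses n_gt _; [exact: rho1_clauses | exact: rhoC_clauses].
Qed.
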